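(* Let $C\to B'\to B$ be resolving morphisms of resolving algebras such that $B'$ is finite over $C$ and $B$ has a basis over $B'$ consisting of one element $x$ of degree $r\le0$ (so $dx\in B'$). Let $A$ be a dg algebra with a fixed morphism $C\to A$. Then the map $\pi_0\mathbf{Hom}_C(B',A)\to h^{r+1}(A)$, $[h]\mapsto[h(dx)]$, is well defined and the sequence $$\pi_0\mathbf{Hom}_C(B,A)\longrightarrow\pi_0\mathbf{Hom}_C(B',A)\longrightarrow h^{r+1}(A)$$ is exact in the middle: an element of $\pi_0\mathbf{Hom}_C(B',A)$ lies in the image of the first map if and only if it maps to $0$ in $h^{r+1}(A)$.
   Context: $k$ is a field of characteristic $0$; dg algebras are graded-commutative unital $k$-algebras with differential of degree $+1$. $C\to B$ is resolving if $B^\natural\cong C^\natural\otimes_kk[x_i]$ for homogeneous $x_i$ of degree $\le0$; finite if the basis can be chosen finite; resolving algebras are those resolving over $k$. $\Omega_n$: algebraic de Rham complex of $\mathrm{Spec}\,k[t_0,\dots,t_n]/(\sum t_i-1)$; $\mathbf{Hom}(B,A)$ is the simplicial set with $n$-simplices the dg morphisms $B\to A\otimes_k\Omega_n$; $\mathbf{Hom}_C(B,A)$ is the fibre of $\mathbf{Hom}(B,A)\to\mathbf{Hom}(C,A)$ over the fixed vertex $C\to A$; $\pi_0$ denotes the set of homotopy classes of vertices; the first map is restriction along $B'\subset B$. *)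

From mathcomp Require Import all_boot all_order all_algebra.
From Stdlib Require Import Relations.Relation_Definitions Relations.Relation_Operators.
Set Implicit Arguments.
Unset Strict Implicit.
Unset Printing Implicit Defensive.
Import Order.TTheory GRing.Theory Num.Theory.
Local Open Scope ring_scope.

Definition sgnz (R : pzRingType) (z : int) : R := (-1) ^+ `|z|%N.

Definition is_dga (k : fieldType) (A : pzRingType) (alg : k -> A)
  (hd : int -> pred A) (d : A -> A) : Prop :=
  [/\
      (forall a b, alg (a + b) = alg a + alg b) /\
      (forall a b, alg (a * b) = alg a * alg b) /\ alg 1 = 1 /\
      (forall a x, alg a * x = x * alg a),
      (forall n, hd n 0) /\
      (forall n x y, hd n x -> hd n y -> hd n (x + y)) /\
      (forall n a x, hd n x -> hd n (alg a * x)) /\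
      hd 0 1 /\
      (forall m n x y, hd m x -> hd n y -> hd (m + n) (x * y)),
      (* A is the direct sum of the hd n *)
      (forall x, exists s : seq (int * A),
          all (fun p => hd p.1 p.2) s /\ x = \sum_(p <- s) p.2) /\
      (forall s : seq (int * A), uniq (map fst s) ->
          all (fun p => hd p.1 p.2) s -> \sum_(p <- s) p.2 = 0 ->
          all (fun p => p.2 == 0) s),
      (forall m n x y, hd m x -> hd n y -> x * y = sgnz A (m * n) * (y * x))
    &
      (forall x y, d (x + y) = d x + d y) /\
      (forall a x, d (alg a * x) = alg a * d x) /\
      (forall n x, hd n x -> hd (n + 1) (d x)) /\
      (forall x, d (d x) = 0) /\
      (forall m x y, hd m x -> d (x * y) = d x * y + sgnz A m * (x * d y))].

Record dga (k : fieldType) := DGA {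
  car :> pzRingType;
  alg : k -> car;
  hd : int -> pred car;
  dif : car -> car;
  dga_ax : is_dga alg hd dif }.

Arguments alg {k} A _ : rename.
Arguments hd {k} A _ _ : rename.
Arguments dif {k} A _ : rename.

Definition is_dgmor (k : fieldType) (A B : dga k) (f : A -> B) : Prop :=
  [/\ (forall x y, f (x + y) = f x + f y) /\
      (forall x y, f (x * y) = f x * f y),
      f 1 = 1,
      forall a, f (alg A a) = alg B a,
      forall n x, hd A n x -> hd B n (f x)
    & forall x, f (dif A x) = dif B (f x)].

(* Resolving morphisms.  C -> B is resolving w.r.t. homogeneous x_i    *)
(* (i : I, degree deg i <= 0) if the canonical map                     *)
(* C^nat (x) k[x_i] -> B^nat, c (x) m |-> phi c * m(x), is bijective,  *)
(* i.e. the graded monomials in the x_i form a basis of B as a left     *)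
(* C-module.  Graded monomials are written as sequences of indices,    *)
(* sorted for an auxiliary strict total order on I, in which each       *)
(* odd-degree generator occurs at most once.                           *)

Definition strict_total (I : eqType) (ord : rel I) : Prop :=
  [/\ forall i, ~~ ord i i,
      forall i j l, ord i j -> ord j l -> ord i l
    & forall i j, i != j -> ord i j || ord j i].

Definition gr_monomial (I : eqType) (ord : rel I) (deg : I -> int)
  (s : seq I) : bool :=
  sorted (fun i j => (i == j) || ord i j) s &&
  all (fun i => odd `|deg i|%N ==> (count_mem i s <= 1)%N) s.

Definition monom (k : fieldType) (B : dga k) (I : Type) (x : I -> B)
  (s : seq I) : B := \prod_(i <- s) x i.

Definition monomial_basis (k : fieldType) (R : pzRingType) (B : dga k)
  (phi : R -> B) (I : eqType) (ord : rel I) (deg : I -> int) (x : I -> B)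
  : Prop :=
  [/\ strict_total ord,
      forall i, hd B (deg i) (x i) /\ deg i <= 0,
      (forall b : B, exists l : seq (R * seq I),
          all (gr_monomial ord deg) (map snd l) /\
          b = \sum_(p <- l) phi p.1 * monom x p.2)
    & (forall l : seq (R * seq I), uniq (map snd l) ->
          all (gr_monomial ord deg) (map snd l) ->
          \sum_(p <- l) phi p.1 * monom x p.2 = 0 ->
          forall p, p \in l -> p.1 = 0)].

Definition resolving_wrt (k : fieldType) (C B : dga k) (phi : C -> B)
  (I : eqType) (ord : rel I) (deg : I -> int) (x : I -> B) : Prop :=
  is_dgmor phi /\ monomial_basis phi ord deg x.

Definition resolving (k : fieldType) (C B : dga k) (phi : C -> B) : Prop :=
  exists (I : eqType) (ord : rel I) (deg : I -> int) (x : I -> B),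
    resolving_wrt phi ord deg x.

Definition finite_resolving (k : fieldType) (C B : dga k) (phi : C -> B)
  : Prop :=
  exists (I : eqType) (ord : rel I) (deg : I -> int) (x : I -> B)
         (e : seq I),
    (forall i, i \in e) /\ resolving_wrt phi ord deg x.

Definition resolving_alg (k : fieldType) (B : dga k) : Prop :=
  exists (I : eqType) (ord : rel I) (deg : I -> int) (x : I -> B),
    monomial_basis (alg B) ord deg x.

(* A (x) Omega_1.  Omega_1 = k[t] + k[t] dt (t = t_1, t_0 = 1 - t).    *)
(* An element of A (x) Omega_1 is p(t) + q(t) dt with p, q polynomials  *)
(* with coefficients in A, represented by coefficient sequences        *)
(* (compared coefficientwise, trailing zeros irrelevant).  It is        *)
(* homogeneous of degree n iff the coefficients of p lie in A^n and     *)
(* those of q in A^(n-1).  For homogeneous factors of degrees n, n':    *)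
(*  (p + q dt)(p' + q' dt) = pp' + (pq' + (-1)^n' q p') dt,             *)
(*  d(p + q dt) = d_A p + ((-1)^n p' + d_A q) dt                        *)
(* (Koszul signs, d(a (x) w) = da (x) w + (-1)^|a| a (x) dw).           *)

Section PolySeq.
Variable R : pzRingType.
Definition pc (p : seq R) (i : nat) : R := nth 0 p i.
Definition peq (p q : seq R) : Prop := forall i, pc p i = pc q i.
Definition padd (p q : seq R) : seq R :=
  mkseq (fun m => pc p m + pc q m) (maxn (size p) (size q)).
Definition pmul (p q : seq R) : seq R :=
  mkseq (fun m => \sum_(i < m.+1) pc p i * pc q (m - i)) (size p + size q).
Definition pscale (s : R) (p : seq R) : seq R := map (fun a => s * a) p.
Definition pder (p : seq R) : seq R :=
  mkseq (fun m => pc p m.+1 *+ m.+1) (size p).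
Definition pev0 (p : seq R) : R := pc p 0.
Definition pev1 (p : seq R) : R := \sum_(a <- p) a.
End PolySeq.

(* H = (P, Q) : B -> A (x) Omega_1, b |-> P b + Q b dt, is a morphism of *)
(* dg k-algebras (conditions on homogeneous elements suffice since B is  *)
(* the direct sum of its homogeneous parts and H is additive).           *)
Definition is_dgmor_Omega1 (k : fieldType) (B A : dga k)
  (P Q : B -> seq A) : Prop :=
  [/\ forall b b', peq (P (b + b')) (padd (P b) (P b')) /\
                   peq (Q (b + b')) (padd (Q b) (Q b')),
      forall a, peq (P (alg B a)) [:: alg A a] /\ peq (Q (alg B a)) [::],
      peq (P 1) [:: 1] /\ peq (Q 1) [::] /\
      forall n b, hd B n b ->
        (forall i, hd A n (pc (P b) i) /\ hd A (n - 1) (pc (Q b) i)),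
      forall m n b b', hd B m b -> hd B n b' ->
        peq (P (b * b')) (pmul (P b) (P b')) /\
        peq (Q (b * b')) (padd (pmul (P b) (Q b'))
                               (pscale (sgnz A n) (pmul (Q b) (P b'))))
    & forall n b, hd B n b ->
        peq (P (dif B b)) (map (dif A) (P b)) /\
        peq (Q (dif B b)) (padd (pscale (sgnz A n) (pder (P b)))
                                (map (dif A) (Q b)))].

(* The simplicial set Hom_C(B, A) in simplicial degrees 0 and 1, and   *)
(* pi_0 (the equivalence relation generated by the 1-simplices).       *)
(* C -> B is phi, the fixed vertex C -> A is f.                         *)

(* vertices: dg morphisms B -> A (x) Omega_0 = A over C *)
Definition vertexC (k : fieldType) (C B A : dga k) (phi : C -> B)
  (f : C -> A) (h : B -> A) : Prop :=
  is_dgmor h /\ forall c, h (phi c) = f c.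

(* 1-simplices over C: their restriction to C is the degenerate simplex *)
(* c |-> f c (x) 1 on the vertex f.                                     *)
Definition edgeC (k : fieldType) (C B A : dga k) (phi : C -> B)
  (f : C -> A) (P Q : B -> seq A) : Prop :=
  is_dgmor_Omega1 P Q /\
  forall c, peq (P (phi c)) [:: f c] /\ peq (Q (phi c)) [::].

Definition edge_between (k : fieldType) (C B A : dga k) (phi : C -> B)
  (f : C -> A) (h0 h1 : B -> A) : Prop :=
  exists P Q : B -> seq A, edgeC phi f P Q /\
    (forall b, h0 b = pev0 (P b)) /\ (forall b, h1 b = pev1 (P b)).

Definition homotopicC (k : fieldType) (C B A : dga k) (phi : C -> B)
  (f : C -> A) : relation (B -> A) :=
  clos_refl_sym_trans (B -> A) (edge_between phi f).

Definition coboundary (k : fieldType) (A : dga k) (n : int) (z : A) : Prop :=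
  exists a : A, hd A n a /\ z = dif A a.
Arguments coboundary {k} A n z.

(* Write B = B'[x].  A vertex h : B' -> A over C extends to B iff h(dx) = da
   for some a in A^r: the extension x |-> a is well defined because the
   monomials b x^i (with i <= 1 when x is odd) form a basis of B over B', and
   it commutes with d exactly when da = h(dx).  Conversely, along a 1-simplex
   p(t) + q(t) dt evaluated at the cocycle y = dx, closedness gives
   p' = -(-1)^(r+1) d q, so that p(1) - p(0) is the coboundary of the integral
   of -(-1)^(r+1) q over [0, 1]; hence [h(y)] only depends on the class of h,
   and it vanishes when h is homotopic to a restriction g|B', as then
   h(y) is cohomologous to g(dx) = d(g x). *)

From mathcomp Require Import all_boot all_order all_algebra zify.
From Stdlib Require Import Relations.Relation_Operators.
From Stdlib Require Import FunctionalExtensionality.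
Set Implicit Arguments.
Unset Strict Implicit.
Unset Printing Implicit Defensive.
Import Order.TTheory GRing.Theory Num.Theory.
Local Open Scope ring_scope.

Lemma sum_pred1_uniq (R : nmodType) (I : eqType) (r : seq I) (i : I) (u : R) :
  uniq r -> i \in r -> \sum_(j <- r) (if j == i then u else 0) = u.
Proof.
move=> ur ir; rewrite (bigD1_seq i) //= eqxx big1 ?addr0 // => j /negPf -> //.
Qed.

Lemma prodr_const_seq (R : pzSemiRingType) (I : Type) (s : seq I) (c : R) :
  \prod_(i <- s) c = c ^+ size s.
Proof. by elim: s => [|j s IH]; rewrite ?big_nil ?big_cons ?IH ?exprS. Qed.

Section DgaTheory.
Variables (k : fieldType) (D : dga k).
Implicit Types (u v : D) (a : k).

Lemma algD a b : alg D (a + b) = alg D a + alg D b.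
Proof. by case: (dga_ax D) => [[H _] _ _ _ _]; apply: H. Qed.
Lemma alg1 : alg D 1 = 1.
Proof. by case: (dga_ax D) => [[_ [_ [H _]]] _ _ _ _]. Qed.
Lemma hd0 n : hd D n 0.
Proof. by case: (dga_ax D) => [_ [H _] _ _ _]. Qed.
Lemma hdD n u v : hd D n u -> hd D n v -> hd D n (u + v).
Proof. by case: (dga_ax D) => [_ [_ [H _]] _ _ _]; apply: H. Qed.
Lemma hdZ n a u : hd D n u -> hd D n (alg D a * u).
Proof. by case: (dga_ax D) => [_ [_ [_ [H _]]] _ _ _]; apply: H. Qed.
Lemma hd1 : hd D 0 1.
Proof. by case: (dga_ax D) => [_ [_ [_ [_ [H _]]]] _ _ _]. Qed.
Lemma hdM m n u v : hd D m u -> hd D n v -> hd D (m + n) (u * v).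
Proof. by case: (dga_ax D) => [_ [_ [_ [_ [_ H]]]] _ _ _]; apply: H. Qed.
Lemma hd_decomp u : exists s : seq (int * D),
  all (fun p => hd D p.1 p.2) s /\ u = \sum_(p <- s) p.2.
Proof. by case: (dga_ax D) => [_ _ [H _] _ _]. Qed.
Lemma hd_sum_uniq0 (s : seq (int * D)) : uniq (map fst s) ->
  all (fun p => hd D p.1 p.2) s -> \sum_(p <- s) p.2 = 0 ->
  all (fun p => p.2 == 0) s.
Proof. by case: (dga_ax D) => [_ _ [_ H] _ _]; apply: H. Qed.
Lemma mulr_grC m n u v :
  hd D m u -> hd D n v -> u * v = sgnz D (m * n) * (v * u).
Proof. by case: (dga_ax D) => [_ _ _ H _]; apply: H. Qed.
Lemma difD u v : dif D (u + v) = dif D u + dif D v.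
Proof. by case: (dga_ax D) => [_ _ _ _ [H _]]. Qed.
Lemma difZ a u : dif D (alg D a * u) = alg D a * dif D u.
Proof. by case: (dga_ax D) => [_ _ _ _ [_ [H _]]]. Qed.
Lemma hd_dif n u : hd D n u -> hd D (n + 1) (dif D u).
Proof. by case: (dga_ax D) => [_ _ _ _ [_ [_ [H _]]]]; apply: H. Qed.
Lemma difK u : dif D (dif D u) = 0.
Proof. by case: (dga_ax D) => [_ _ _ _ [_ [_ [_ [H _]]]]]. Qed.
Lemma difM m u v : hd D m u ->
  dif D (u * v) = dif D u * v + sgnz D m * (u * dif D v).
Proof. by case: (dga_ax D) => [_ _ _ _ [_ [_ [_ [_ H]]]]]; apply: H. Qed.

Lemma alg0 : alg D 0 = 0.
Proof. by apply: (addrI (alg D 0)); rewrite -algD !addr0. Qed.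
Lemma algN a : alg D (- a) = - alg D a.
Proof. by apply: (addrI (alg D a)); rewrite -algD !subrr alg0. Qed.
Lemma algMn a n : alg D (a *+ n) = alg D a *+ n.
Proof. by elim: n => [|n IH]; rewrite ?mulr0n ?alg0 // !mulrS algD IH. Qed.

Lemma hdN n u : hd D n u -> hd D n (- u).
Proof. by move=> h; rewrite -mulN1r -alg1 -algN; apply: hdZ. Qed.
Lemma hd_sum (I : Type) (r : seq I) (P : pred I) (F : I -> D) n :
  (forall i, P i -> hd D n (F i)) -> hd D n (\sum_(i <- r | P i) F i).
Proof.
move=> H; elim: r => [|i r IH]; rewrite ?big_nil ?big_cons; first exact: hd0.
by case: ifP => // Pi; apply: hdD => //; apply: H.
Qed.
Lemma hdX n u i : hd D n u -> hd D (n * i%:Z) (u ^+ i).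
Proof.
move=> h; elim: i => [|i IH]; first by rewrite expr0 mulr0; exact: hd1.
by rewrite exprS intS mulrDr mulr1; apply: hdM.
Qed.
Lemma hd_monom (I : Type) (deg : I -> int) (xs : I -> D) (s : seq I) :
  (forall i, hd D (deg i) (xs i)) -> hd D (\sum_(i <- s) deg i) (monom xs s).
Proof.
move=> H; elim: s => [|i s IH]; rewrite /monom ?big_nil; first exact: hd1.
by rewrite !big_cons; apply: hdM.
Qed.

Lemma sgnzE z : sgnz D z = (-1) ^+ odd `|z|%N.
Proof. by rewrite /sgnz signr_odd. Qed.
Lemma sgnzMsgnz z : sgnz D z * sgnz D z = 1.
Proof. by rewrite sgnzE; case: odd; rewrite ?mulrNN mulr1. Qed.
Lemma sgnzC z u : sgnz D z * u = u * sgnz D z.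
Proof. by rewrite sgnzE; case: odd; rewrite ?mulN1r ?mulrN1 ?mul1r ?mulr1. Qed.
Lemma hd_sgnzM n z u : hd D n u -> hd D n (sgnz D z * u).
Proof.
by rewrite sgnzE; case: odd => h; rewrite ?mulN1r ?mul1r //; apply: hdN.
Qed.

Lemma dif0 : dif D 0 = 0.
Proof. by apply: (addrI (dif D 0)); rewrite -difD !addr0. Qed.
Lemma difN u : dif D (- u) = - dif D u.
Proof. by apply: (addrI (dif D u)); rewrite -difD !subrr dif0. Qed.
Lemma dif1 : dif D 1 = 0.
Proof.
have := difM 1 hd1; rewrite /sgnz expr0 !mul1r mulr1.
by move=> e; apply: (addrI (dif D 1)); rewrite addr0 -e.
Qed.
Lemma dif_sgnzM z u : dif D (sgnz D z * u) = sgnz D z * dif D u.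
Proof. by rewrite sgnzE; case: odd; rewrite ?mulN1r ?mul1r ?difN. Qed.
Lemma dif_sum (I : Type) (r : seq I) (F : I -> D) :
  dif D (\sum_(i <- r) F i) = \sum_(i <- r) dif D (F i).
Proof.
by elim: r => [|i r IH]; rewrite ?big_nil ?dif0 // !big_cons difD IH.
Qed.

Lemma mulr_grACA n1 n2 (u v w z : D) : hd D n1 v -> hd D n2 w ->
  (u * v) * (w * z) = sgnz D (n1 * n2) * ((u * w) * (v * z)).
Proof.
move=> hv hw; rewrite mulrA -(mulrA u) (mulr_grC hv hw) -!mulrA.
by rewrite !mulrA (sgnzC _ u).
Qed.

Hypothesis char_k0 : [pchar k] =i pred0.

Lemma alg_invn n u : alg D (n.+1%:R^-1) * (u *+ n.+1) = u.
Proof.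
have nz : n.+1%:R != 0 :> k by have /pcharf0P -> := char_k0.
by rewrite mulrnAr -mulrnAl -algMn -[_ *+ n.+1]mulr_natr mulVf // alg1 mul1r.
Qed.

(* Graded commutativity gives 2 u^2 = 0 for odd u, and 2 is invertible. *)
Lemma expr_hd_odd n u j : hd D n u -> odd `|n|%N -> (1 < j)%N -> u ^+ j = 0.
Proof.
move=> hu on j2; rewrite -(subnK j2) exprD expr2.
have := mulr_grC hu hu; rewrite sgnzE abszM oddM on /= expr1 mulN1r.
move/eqP; rewrite -subr_eq0 opprK => /eqP uu.
by rewrite -(alg_invn 1 (u * u)) (mulr2n (u * u)) uu !mulr0.
Qed.

End DgaTheory.

Section DgMorphism.
Variables (k : fieldType) (A B : dga k) (f : A -> B) (Hf : is_dgmor f).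

Lemma dgmorD u v : f (u + v) = f u + f v.
Proof. by case: Hf => [[H _] _ _ _ _]. Qed.
Lemma dgmorM u v : f (u * v) = f u * f v.
Proof. by case: Hf => [[_ H] _ _ _ _]. Qed.
Lemma dgmor1 : f 1 = 1.
Proof. by case: Hf. Qed.
Lemma dgmor_alg a : f (alg A a) = alg B a.
Proof. by case: Hf. Qed.
Lemma dgmor_hd n u : hd A n u -> hd B n (f u).
Proof. by case: Hf => [_ _ _ H _]; apply: H. Qed.
Lemma dgmor_dif u : f (dif A u) = dif B (f u).
Proof. by case: Hf. Qed.
Lemma dgmor0 : f 0 = 0.
Proof. by apply: (addrI (f 0)); rewrite -dgmorD !addr0. Qed.
Lemma dgmorN u : f (- u) = - f u.
Proof. by apply: (addrI (f u)); rewrite -dgmorD !subrr dgmor0. Qed.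
Lemma dgmor_sum (I : Type) (r : seq I) (P : pred I) (F : I -> A) :
  f (\sum_(i <- r | P i) F i) = \sum_(i <- r | P i) f (F i).
Proof.
elim: r => [|i r IH]; rewrite ?big_nil ?dgmor0 // !big_cons.
by case: ifP => _; rewrite ?dgmorD IH.
Qed.

End DgMorphism.

Section HomogeneousComponents.
Variables (k : fieldType) (D : dga k).

Lemma hd_component_sum0 (s : seq (int * D)) n :
  all (fun p => hd D p.1 p.2) s -> \sum_(p <- s) p.2 = 0 ->
  \sum_(p <- s | p.1 == n) p.2 = 0.
Proof.
move=> hs s0; set ds := undup (map fst s).
set t := [seq (m, \sum_(p <- s | p.1 == m) p.2) | m <- ds].
have ut : uniq (map fst t) by rewrite -map_comp map_id undup_uniq.
have ht : all (fun p => hd D p.1 p.2) t.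
  apply/allP => _ /mapP[m _ ->] /=; rewrite big_seq_cond.
  by apply: hd_sum => p /andP[ps /eqP <-]; move/allP: hs; apply.
have t0 : \sum_(q <- t) q.2 = 0.
  rewrite big_map -[RHS]s0; under eq_bigr => m _ do rewrite big_mkcond /=.
  rewrite exchange_big /=; apply: eq_big_seq => p ps.
  under eq_bigr => m _ do rewrite eq_sym.
  by rewrite sum_pred1_uniq ?undup_uniq // mem_undup map_f.
have /allP tz := hd_sum_uniq0 ut ht t0.
case: (boolP (n \in ds)) => nds; first by apply/eqP/(tz (n, _))/map_f.
rewrite big1_seq // => p /andP[/eqP pn ps]; case/negP: nds.
by rewrite mem_undup -pn map_f.
Qed.

Lemma hd_component (s : seq (int * D)) n b :
  all (fun p => hd D p.1 p.2) s -> hd D n b -> b = \sum_(p <- s) p.2 ->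
  b = \sum_(p <- s | p.1 == n) p.2.
Proof.
move=> hs hb e.
have hs' : all (fun p => hd D p.1 p.2) ((n, - b) :: s) by rewrite /= hdN.
have s0 : \sum_(p <- (n, - b) :: s) p.2 = 0 by rewrite big_cons -e addNr.
move: (hd_component_sum0 n hs' s0); rewrite big_cons /= eqxx => /eqP.
by rewrite addrC subr_eq0 => /eqP.
Qed.

Lemma resolving_alg_hd_gt0 n b : resolving_alg D -> 0 < n -> hd D n b -> b = 0.
Proof.
case=> I [ord [deg [xs [_ hx ex _]]]] n0 hb; case: (ex b) => l [_ e].
pose s := [seq (\sum_(i <- p.2) deg i, alg D p.1 * monom xs p.2) | p <- l].
have hs : all (fun p => hd D p.1 p.2) s.
  apply/allP => _ /mapP[p _ ->] /=; apply/hdZ/hd_monom => i.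
  by case: (hx i).
have e' : b = \sum_(q <- s) q.2 by rewrite big_map.
rewrite (hd_component hs hb e') big1_seq // => q /andP[/eqP dn /mapP[p _ qp]].
move: dn n0; rewrite qp /= => <-; rewrite ltNge => /negP[].
by apply: sumr_le0 => i _; case: (hx i).
Qed.

End HomogeneousComponents.

Section OneGeneratorExtension.
Variables (k : fieldType) (char_k0 : [pchar k] =i pred0) (B' B : dga k)
  (iota : B' -> B) (r : int) (x : B)
  (Hiota : resolving_wrt iota (fun _ _ : unit => false) (fun _ => r)
             (fun _ => x)).

Lemma iota_dgmor : is_dgmor iota.
Proof. by case: Hiota. Qed.

Lemma hd_x : hd B r x.
Proof. by case: Hiota => _ [_ H _ _]; case: (H tt). Qed.

(* x ^+ j is a graded monomial, i.e. x is even or j <= 1. *)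
Definition adm_exp (j : nat) := ~~ odd `|r|%N || (j <= 1)%N.

Lemma expr_nonadm0 (D : dga k) (u : D) j :
  hd D r u -> ~~ adm_exp j -> u ^+ j = 0.
Proof.
rewrite /adm_exp negb_or negbK -ltnNge => hu /andP[o j2].
exact: expr_hd_odd hu o j2.
Qed.

Lemma xterm_coef_eq0 N (c : nat -> B') :
  \sum_(0 <= j < N) iota (c j) * x ^+ j = 0 ->
  forall j, (j < N)%N -> adm_exp j -> c j = 0.
Proof.
move=> s0 j jN aj; case: Hiota => _ [_ _ _ Hfree].
pose l := [seq (c j, nseq j tt) | j <- [seq j <- index_iota 0 N | adm_exp j]].
change ((c j, nseq j tt).1 = 0); apply: (Hfree l).
- rewrite -map_comp map_inj_uniq ?filter_uniq ?iota_uniq //.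
  by move=> i1 i2 /= /(congr1 size); rewrite !size_nseq.
- apply/allP => _ /mapP[_ /mapP[i ih ->] ->]; move: ih.
  rewrite mem_filter => /andP[ai _] /=.
  have srt : sorted (fun i j : unit => (i == j) || false) (nseq i tt).
    by elim: i {ai} => [|[|i] IH].
  rewrite /gr_monomial srt /=; apply/allP => u _; apply/implyP => o.
  by rewrite count_nseq /= mul1n; move: ai; rewrite /adm_exp o.
- rewrite big_map big_filter -[RHS]s0 big_mkcond /=; apply: eq_bigr => i _.
  rewrite /monom prodr_const_seq size_nseq.
  by case: ifP => // /negbT /(expr_nonadm0 hd_x) ->; rewrite mulr0.
- by apply: map_f; rewrite mem_filter aj mem_index_iota.
Qed.

Lemma iota_inj : injective iota.
Proof.
move=> u v e; apply/eqP; rewrite -subr_eq0; apply/eqP.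
apply: (@xterm_coef_eq0 1 (fun _ => u - v) _ 0); rewrite /adm_exp ?orbT //.
by rewrite big_nat1 expr0 mulr1 (dgmorD iota_dgmor) (dgmorN iota_dgmor) e subrr.
Qed.

Definition xterm (p : B' * nat) := iota p.1 * x ^+ p.2.

Lemma hd_xterm m b i : hd B' m b -> hd B (m + r * i%:Z) (xterm (b, i)).
Proof. by move=> hb; apply/hdM/hdX/hd_x; exact: (dgmor_hd iota_dgmor). Qed.

Lemma xterm_decomp (b : B) : exists s : seq (int * (B' * nat)),
  all (fun q => hd B' q.1 q.2.1) s /\ b = \sum_(q <- s) xterm q.2.
Proof.
case: Hiota => _ [_ _ ex _]; case: (ex b) => l [_ ->] {ex}.
elim: l => [|p l [s [hs e]]]; first by exists [::]; rewrite !big_nil.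
case: (hd_decomp p.1) => s1 [hs1 e1].
exists ([seq (q.1, (q.2, size p.2)) | q <- s1] ++ s); split.
  by rewrite all_cat hs andbT all_map; apply: sub_all hs1.
rewrite big_cons big_cat e big_map /=; congr (_ + _).
by rewrite /monom prodr_const_seq {1}e1 (dgmor_sum iota_dgmor) mulr_suml.
Qed.

Lemma xterm_span (b : B) :
  exists s : seq (B' * nat), b == \sum_(p <- s) xterm p.
Proof.
by case: (xterm_decomp b) => s [_ e]; exists (map snd s); rewrite big_map e.
Qed.

Lemma sum_by_exponent (T : dga k) (psi : B' -> T) (z : T) N
  (s : seq (B' * nat)) : is_dgmor psi -> (forall p, p \in s -> (p.2 < N)%N) ->
  \sum_(p <- s) psi p.1 * z ^+ p.2 =
  \sum_(0 <= j < N) psi (\sum_(p <- s) (if p.2 == j then p.1 else 0)) * z ^+ j.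
Proof.
move=> Hpsi hN.
under [RHS]eq_bigr => j _ do rewrite (dgmor_sum Hpsi) mulr_suml.
rewrite exchange_big /=; apply: eq_big_seq => p ps.
rewrite -[LHS](@sum_pred1_uniq _ _ (index_iota 0 N) p.2)
  ?iota_uniq ?mem_index_iota ?hN //.
apply: eq_bigr => j _; rewrite eq_sym; case: eqVneq => [->|_] //.
by rewrite (dgmor0 Hpsi) mul0r.
Qed.

Section Extension.
Variables (A : dga k) (h : B' -> A) (Hh : is_dgmor h) (a : A) (ha : hd A r a).

Definition aterm (p : B' * nat) := h p.1 * a ^+ p.2.

Lemma aterm_sum0 (s : seq (B' * nat)) :
  \sum_(p <- s) xterm p = 0 -> \sum_(p <- s) aterm p = 0.
Proof.
pose N := (\max_(p <- s) p.2).+1.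
have hN p : p \in s -> (p.2 < N)%N.
  by move=> ps; rewrite ltnS (@leq_bigmax_seq _ _ _ (fun p : B' * nat => p.2)).
rewrite /xterm /aterm (sum_by_exponent x iota_dgmor hN).
rewrite (sum_by_exponent a Hh hN).
move=> s0; rewrite big_nat big1 // => j /andP[_ jN].
case: (boolP (adm_exp j)) => aj.
  by rewrite (xterm_coef_eq0 s0 jN aj) (dgmor0 Hh) mul0r.
by rewrite expr_nonadm0 // mulr0.
Qed.

Definition extension (b : B) : A :=
  \sum_(p <- xchoose (xterm_span b)) aterm p.

Lemma extensionE (b : B) (s : seq (B' * nat)) :
  b = \sum_(p <- s) xterm p -> extension b = \sum_(p <- s) aterm p.
Proof.
move=> e; have /eqP e0 := xchooseP (xterm_span b).
pose opp1 (p : B' * nat) := (- p.1, p.2).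
have xN : \sum_(p <- map opp1 s) xterm p = - \sum_(p <- s) xterm p.
  rewrite big_map -sumrN; apply: eq_bigr => p _.
  by rewrite /xterm /= (dgmorN iota_dgmor) mulNr.
have aN : \sum_(p <- map opp1 s) aterm p = - \sum_(p <- s) aterm p.
  rewrite big_map -sumrN; apply: eq_bigr => p _.
  by rewrite /aterm /= (dgmorN Hh) mulNr.
move: (@aterm_sum0 (xchoose (xterm_span b) ++ map opp1 s)).
rewrite !big_cat /= xN aN -e0 -e subrr => /(_ erefl) /eqP.
by rewrite subr_eq0 => /eqP.
Qed.

Lemma extensionD u v : extension (u + v) = extension u + extension v.
Proof.
case: (xterm_span u) => s /eqP es; case: (xterm_span v) => t /eqP et.
have e : u + v = \sum_(p <- s ++ t) xterm p by rewrite big_cat -es -et.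
by rewrite (extensionE e) (extensionE es) (extensionE et) big_cat.
Qed.

Lemma extension0 : extension 0 = 0.
Proof. by rewrite (@extensionE _ [::]) ?big_nil. Qed.

Lemma extension_sgnzM z u : extension (sgnz B z * u) = sgnz A z * extension u.
Proof.
have extensionN v : extension (- v) = - extension v.
  by apply: (addrI (extension v)); rewrite -extensionD !subrr extension0.
by rewrite !sgnzE; case: odd; rewrite ?mulN1r ?mul1r ?extensionN.
Qed.

Lemma extension_sum (I : Type) (l : seq I) (P : pred I) (F : I -> B) :
  extension (\sum_(i <- l | P i) F i) = \sum_(i <- l | P i) extension (F i).
Proof.
elim: l => [|i l IH]; rewrite ?big_nil ?extension0 // !big_cons.
by case: ifP => _; rewrite ?extensionD IH.
Qed.

Lemma extension_xterm p : extension (xterm p) = aterm p.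
Proof. by rewrite (@extensionE _ [:: p]) ?big_seq1. Qed.

Lemma extension_iota b : extension (iota b) = h b.
Proof.
by have := extension_xterm (b, 0%N); rewrite /xterm /aterm /= !expr0 !mulr1.
Qed.

Lemma extension_xX i : extension (x ^+ i) = a ^+ i.
Proof.
have := extension_xterm (1, i).
by rewrite /xterm /aterm /= (dgmor1 iota_dgmor) (dgmor1 Hh) !mul1r.
Qed.

Lemma hd_aterm m b i : hd B' m b -> hd A (m + r * i%:Z) (aterm (b, i)).
Proof. by move=> hb; apply: hdM; [exact: (dgmor_hd Hh) | exact: hdX ha]. Qed.

(* Moving x^i past b' produces the same Koszul sign in B as a^i past h b'. *)
Lemma extension_xtermM m' b i b' j : hd B' m' b' ->
  extension (xterm (b, i) * xterm (b', j)) = aterm (b, i) * aterm (b', j).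
Proof.
move=> hb'; rewrite /xterm /aterm /=.
rewrite (mulr_grACA _ _ (hdX i hd_x) (dgmor_hd iota_dgmor hb')).
rewrite (mulr_grACA _ _ (hdX i ha) (dgmor_hd Hh hb')) extension_sgnzM.
rewrite -(dgmorM iota_dgmor) -(dgmorM Hh) -!exprD.
by have := extension_xterm (b * b', (i + j)%N); rewrite /xterm /aterm /= => ->.
Qed.

Lemma extensionM u v : extension (u * v) = extension u * extension v.
Proof.
case: (xterm_decomp u) => s [hs es]; case: (xterm_decomp v) => t [ht et].
rewrite es et mulr_suml !extension_sum mulr_suml.
apply: eq_bigr => q _; rewrite mulr_sumr extension_sum mulr_sumr.
apply: eq_big_seq => -[m' [b' j]] q't; rewrite !extension_xterm.
by case: q => m [b i] /=; exact: extension_xtermM (allP ht _ q't).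
Qed.

Lemma extension_hd n u : hd B n u -> hd A n (extension u).
Proof.
move=> hu; case: (xterm_decomp u) => s [hs es].
pose L := [seq (q.1 + r * q.2.2%:Z, xterm q.2) | q <- s].
have hL : all (fun p => hd B p.1 p.2) L.
  apply/allP => _ /mapP[[m [b i]] qs ->] /=; apply: hd_xterm.
  by move/allP: hs => /(_ _ qs).
have eL : u = \sum_(p <- L) p.2 by rewrite big_map.
rewrite (hd_component hL hu eL) big_map extension_sum big_seq_cond.
apply: hd_sum => -[m [b i]] /andP[qs /eqP <-]; rewrite extension_xterm.
by apply: hd_aterm; move/allP: hs => /(_ _ qs).
Qed.

Variables (y : B') (hy : iota y = dif B x) (hay : dif A a = h y).

Lemma extension_dif_xX i : extension (dif B (x ^+ i)) = dif A (a ^+ i).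
Proof.
elim: i => [|i IH]; first by rewrite !expr0 !dif1 extension0.
rewrite !exprS (difM _ hd_x) (difM _ ha) extensionD extension_sgnzM.
rewrite !extensionM -hy extension_iota extension_xX IH -hay.
by rewrite -{1}(expr1 x) extension_xX expr1.
Qed.

Lemma extension_dif u : extension (dif B u) = dif A (extension u).
Proof.
case: (xterm_decomp u) => s [hs ->]; rewrite dif_sum !extension_sum dif_sum.
apply: eq_big_seq => -[m [b i]] qs /=.
have hb : hd B' m b by move/allP: hs => /(_ _ qs).
rewrite extension_xterm /xterm /aterm /= (difM _ (dgmor_hd iota_dgmor hb)).
rewrite (difM _ (dgmor_hd Hh hb)) extensionD extension_sgnzM !extensionM.
by rewrite -(dgmor_dif iota_dgmor) !extension_iota extension_xX extension_dif_xX
  (dgmor_dif Hh).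
Qed.

Lemma extension_dgmor : is_dgmor extension.
Proof.
split; [split; [exact: extensionD | exact: extensionM] | | | exact: extension_hd
       | exact: extension_dif].
- by rewrite -(dgmor1 iota_dgmor) extension_iota (dgmor1 Hh).
- by move=> c; rewrite -(dgmor_alg iota_dgmor) extension_iota (dgmor_alg Hh).
Qed.

End Extension.
End OneGeneratorExtension.

Section PolySeqCoef.
Variable R : pzRingType.
Implicit Types p q : seq R.

Lemma pc_padd p q i : pc (padd p q) i = pc p i + pc q i.
Proof.
rewrite /pc /padd; case: (ltnP i (maxn (size p) (size q))) => hi.
  by rewrite nth_mkseq.
by rewrite !nth_default ?addr0 ?size_mkseq // (leq_trans _ hi)
  ?leq_maxl ?leq_maxr.
Qed.

Lemma pc_pscale s p i : pc (pscale s p) i = s * pc p i.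
Proof.
rewrite /pc /pscale; case: (ltnP i (size p)) => hi.
  by rewrite (nth_map 0).
by rewrite !nth_default ?mulr0 ?size_map.
Qed.

Lemma pc_pder p i : pc (pder p) i = pc p i.+1 *+ i.+1.
Proof.
rewrite /pc /pder; case: (ltnP i (size p)) => hi; first by rewrite nth_mkseq.
by rewrite !nth_default ?mul0rn ?size_mkseq // ltnW.
Qed.

Lemma pc_map (d : R -> R) p i : d 0 = 0 -> pc (map d p) i = d (pc p i).
Proof.
move=> d0; rewrite /pc; case: (ltnP i (size p)) => hi.
  by rewrite (nth_map 0).
by rewrite !nth_default ?size_map.
Qed.

End PolySeqCoef.

Section HomotopyInvariance.
Variables (k : fieldType) (char_k0 : [pchar k] =i pred0) (C B' A : dga k)
  (phi : C -> B') (f : C -> A) (r : int) (y : B')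
  (hy : hd B' (r + 1) y) (dy : dif B' y = 0).

Lemma edge_coboundary P Q :
  edgeC phi f P Q -> coboundary A r (pev0 (P y) - pev1 (P y)).
Proof.
case=> -[Hadd _ [_ [_ Hdeg]] _ Hdif] _.
have Q0 i : pc (Q 0) i = 0.
  case: (Hadd 0 0) => _; rewrite addr0 => /(_ i); rewrite pc_padd => e.
  by apply: (addrI (pc (Q 0) i)); rewrite addr0 -e.
case: (Hdif _ _ hy) => _ Hd.
set p := P y; set q := Q y; pose sg := sgnz A (r + 1).
pose w i := alg A (i.+1%:R^-1) * (- (sg * pc q i)).
have pS i : pc p i.+1 = dif A (w i).
  move: (Hd i); rewrite dy Q0 pc_padd pc_pscale pc_pder (pc_map _ _ (dif0 A)).
  move/esym/eqP; rewrite addrC addr_eq0 => /eqP e.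
  have e' : pc p i.+1 *+ i.+1 = sg * - dif A (pc q i).
    by rewrite e opprK mulrA sgnzMsgnz mul1r.
  by rewrite /w difZ difN dif_sgnzM -mulrN -e' alg_invn.
exists (- \sum_(0 <= i < size p) w i); split.
  apply/hdN/hd_sum => i _; apply/hdZ/hdN/hd_sgnzM.
  by have := (Hdeg _ _ hy i).2; rewrite addrK.
rewrite difN dif_sum /pev0 /pev1 (big_nth 0) -/(pc p _).
have -> : \sum_(0 <= i < size p) nth 0 p i = \sum_(0 <= i < (size p).+1) pc p i.
  by rewrite big_nat_recr //= /pc (nth_default 0 (leqnn _)) addr0.
rewrite big_nat_recl // opprD addrA subrr add0r; congr (- _).
by apply: eq_bigr => i _; rewrite pS.
Qed.

Lemma homotopicC_coboundary h h' :
  homotopicC phi f h h' -> coboundary A r (h y - h' y).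
Proof.
elim=> {h h'}.
- by move=> h0 h1 [P [Q [E [e0 e1]]]]; rewrite e0 e1; apply: edge_coboundary E.
- by move=> h0; exists 0; rewrite subrr dif0; split => //; apply: hd0.
- move=> h0 h1 _ [w [hw e]]; exists (- w); split; first exact: hdN.
  by rewrite difN -e opprB.
- move=> h0 h1 h2 _ [w1 [hw1 e1]] _ [w2 [hw2 e2]]; exists (w1 + w2).
  by split; [exact: hdD | rewrite difD -e1 -e2 addrA subrK].
Qed.

End HomotopyInvariance.

Section RestrictionSequence.
Variables (k : fieldType) (char_k0 : [pchar k] =i pred0) (B' B : dga k)
  (iota : B' -> B) (r : int) (x : B)
  (Hiota : resolving_wrt iota (fun _ _ : unit => false) (fun _ => r)
             (fun _ => x)).

Lemma iota_hd_reflect m b : hd B m (iota b) -> hd B' m b.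
Proof.
have Hi := iota_dgmor Hiota.
move=> hb; case: (hd_decomp b) => s [hs es].
pose L := [seq (q.1, iota q.2) | q <- s].
have hL : all (fun p => hd B p.1 p.2) L.
  by rewrite all_map; apply: sub_all hs => q; apply: dgmor_hd.
have eL : iota b = \sum_(p <- L) p.2 by rewrite big_map {1}es (dgmor_sum Hi).
move: (hd_component hL hb eL); rewrite big_map -(dgmor_sum Hi).
move/(iota_inj char_k0 Hiota) ->; rewrite big_seq_cond.
by apply: hd_sum => q /andP[qs /eqP <-]; move/allP: hs => /(_ _ qs).
Qed.

(* Components of dx of positive x-degree have coefficients of degree
   r + 1 - r i > 0, which vanish in the resolving algebra B'. *)
Lemma dif_x_in_image : resolving_alg B' -> r <= 0 -> exists y, iota y = dif B x.
Proof.
move=> HB' Hr; have Hi := iota_dgmor Hiota.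
case: (xterm_decomp Hiota (dif B x)) => s [hs es].
pose L := [seq (q.1 + r * q.2.2%:Z, xterm iota x q.2) | q <- s].
have hL : all (fun p => hd B p.1 p.2) L.
  apply/allP => _ /mapP[[m [b i]] qs ->] /=; apply: (hd_xterm Hiota).
  by move/allP: hs => /(_ _ qs).
have eL : dif B x = \sum_(p <- L) p.2 by rewrite big_map.
move: (hd_component hL (hd_dif (hd_x Hiota)) eL); rewrite big_map => ->.
exists (\sum_(q <- s | q.1 + r * q.2.2%:Z == r + 1)
          (if q.2.2 == 0%N then q.2.1 else 0)).
rewrite (dgmor_sum Hi) big_seq_cond [RHS]big_seq_cond; apply: eq_bigr.
move=> -[m [b i]] /andP[qs /eqP /= e]; rewrite /xterm /=.
case: eqVneq => [->|ni]; first by rewrite expr0 mulr1.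
have m0 : 0 < m.
  have : r * (i%:Z - 1) <= 0 by rewrite mulr_le0_ge0 // subr_ge0 lez_nat lt0n.
  rewrite mulrBr mulr1; lia.
have hb : hd B' m b by move/allP: hs => /(_ _ qs).
by rewrite (resolving_alg_hd_gt0 HB' m0 hb) (dgmor0 Hi) mul0r.
Qed.

Variables (C A : dga k) (phi : C -> B') (f : C -> A) (y : B')
  (hy : iota y = dif B x).

Lemma hd_dx_preimage : hd B' (r + 1) y.
Proof. by apply: iota_hd_reflect; rewrite hy; apply/hd_dif/(hd_x Hiota). Qed.

Lemma dif_dx_preimage : dif B' y = 0.
Proof.
have Hi := iota_dgmor Hiota.
by apply: (iota_inj char_k0 Hiota); rewrite (dgmor_dif Hi) hy difK (dgmor0 Hi).
Qed.

Lemma restriction_coboundary h g :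
  vertexC (fun c => iota (phi c)) f g ->
  homotopicC phi f h (fun b => g (iota b)) -> coboundary A r (h y).
Proof.
case=> Hg _ /(homotopicC_coboundary char_k0 hd_dx_preimage dif_dx_preimage).
case=> w [hw e]; exists (w + g x); split.
  exact/hdD/(dgmor_hd Hg)/(hd_x Hiota).
by rewrite difD -e -(dgmor_dif Hg) -hy subrK.
Qed.

Lemma coboundary_extends h : vertexC phi f h -> coboundary A r (h y) ->
  exists g, vertexC (fun c => iota (phi c)) f g /\
            homotopicC phi f h (fun b => g (iota b)).
Proof.
case=> Hh hf [a [ha ea]].
have gh := extension_iota char_k0 Hiota Hh ha.
exists (extension Hiota h a); split.
  split=> [|c]; last by rewrite gh.
  exact: (extension_dgmor char_k0 Hiota Hh ha hy (esym ea)).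
suff -> : (fun b => extension Hiota h a (iota b)) = h by apply: rst_refl.
exact: functional_extensionality.
Qed.

End RestrictionSequence.

Unset Implicit Arguments.
Theorem proposition4p15 (k : fieldType) (Hk : [pchar k] =i pred0)
  (C B' B A : dga k) (phi : C -> B') (iota : B' -> B) (f : C -> A)
  (HC : resolving_alg C) (HB' : resolving_alg B') (HB : resolving_alg B)
  (Hphi : resolving phi) (Hfin : finite_resolving phi)
  (r : int) (x : B) (Hr : r <= 0)
  (Hiota : resolving_wrt iota (fun _ _ : unit => false) (fun _ => r)
             (fun _ => x))
  (Hf : is_dgmor f) :
  (exists y : B', iota y = dif B x) /\
  forall y : B', iota y = dif B x ->
    (* the map [h] |-> [h(dx)] into h^(r+1)(A) is well defined *)
    (forall h : B' -> A, vertexC phi f h ->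
       hd A (r + 1) (h y) /\ dif A (h y) = 0) /\
    (forall h h' : B' -> A, vertexC phi f h -> vertexC phi f h' ->
       homotopicC phi f h h' -> coboundary A r (h y - h' y)) /\
    (* exactness in the middle *)
    (forall h : B' -> A, vertexC phi f h ->
       ((exists g : B -> A, vertexC (fun c => iota (phi c)) f g /\
            homotopicC phi f h (fun b => g (iota b)))
        <-> coboundary A r (h y))).
Proof.
split; first exact: dif_x_in_image Hiota HB' Hr.
move=> y hy; have hy' := hd_dx_preimage Hk Hiota hy.
have dy := dif_dx_preimage Hk Hiota hy.
split; [|split].
- move=> h [Hh _]; split; first exact: dgmor_hd Hh _ _ hy'.
  by rewrite -(dgmor_dif Hh) dy (dgmor0 Hh).
- by move=> h h' _ _; exact: (homotopicC_coboundary Hk hy' dy).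
- move=> h Hh; split.
    by case=> g []; exact: (restriction_coboundary Hk Hiota hy).
  exact: (coboundary_extends Hk Hiota hy Hh).
Qed.
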